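(* For every $n\ge 1$, every orientation $\overrightarrow{K_{1,n}}$ of the star $K_{1,n}$ is $\{0,1\}$-antimagic.
   Context: An oriented graph $\overrightarrow{G}$ is a directed graph obtained from a simple undirected graph by giving each edge one direction. For vertices $u,v$, $d(u,v)$ is the length of a shortest directed path from $u$ to $v$ ($d(u,u)=0$, and $d(u,v)=\infty$ if there is no such path). Let $\partial=\max\{d(u,v)<\infty : u,v\in V(\overrightarrow{G})\}$. A distance set is a nonempty $D\subseteq\{0,1,\dots,\partial\}$. The $D$-neighborhood of $u$ is $N_D(u)=\{v : d(u,v)\in D\}$. For a bijection $f:V(\overrightarrow{G})\to\{1,\dots,|V(\overrightarrow{G})|\}$, the $D$-weight of $u$ is $\omega_D(u)=\sum_{v\in N_D(u)} f(v)$. $\overrightarrow{G}$ is $D$-antimagic if $D\subseteq\{0,\dots,\partial\}$ and there is such a bijection $f$ with all $D$-weights pairwise distinct. *)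

From mathcomp Require Import all_boot.
Set Implicit Arguments. Unset Strict Implicit. Unset Printing Implicit Defensive.

Definition oriented (V : finType) (arc : rel V) : Prop :=
  (forall u, ~~ arc u u) /\ (forall u v, arc u v -> ~~ arc v u).

Fixpoint walk_k (V : finType) (arc : rel V) (k : nat) (u v : V) : bool :=
  match k with
  | 0 => u == v
  | k'.+1 => [exists w, arc u w && walk_k arc k' w v]
  end.

Definition dist_eq (V : finType) (arc : rel V) (u v : V) (k : nat) : bool :=
  walk_k arc k u v && [forall j : 'I_k, ~~ walk_k arc j u v].

(* k <= partial, where partial = max of the finite distances *)
Definition le_diam (V : finType) (arc : rel V) (k : nat) : Prop :=
  exists u v d, dist_eq arc u v d /\ k <= d.

Definition distance_set (V : finType) (arc : rel V) (D : pred nat) : Prop :=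
  (exists k, D k) /\ (forall k, D k -> le_diam arc k).

(* N_D(u) as a boolean predicate; finite distances are always < #|V|
   (shortest walks are paths), so quantifying over 'I_#|V| is exhaustive *)
Definition inNbD (V : finType) (arc : rel V) (D : pred nat) (u v : V) : bool :=
  [exists k : 'I_#|V|, D k && dist_eq arc u v k].

(* D-antimagic: D is a distance set and there is a bijective labelling
   f : V -> {1..|V|} (here encoded as a bijection onto 'I_#|V|, label = val + 1)
   with pairwise distinct D-weights *)
Definition D_antimagic (V : finType) (arc : rel V) (D : pred nat) : Prop :=
  distance_set arc D /\
  exists f : V -> 'I_#|V|, bijective f /\
    injective (fun u : V =>
      \sum_(v : V | inNbD arc D u v) (val (f v)).+1).

(* orientation of the star K_{1,n}: vertex ord0 is the centre, vertices
   1..n are leaves; o i = true means arc centre -> leaf (i+1), false means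
   leaf (i+1) -> centre. *)
Definition star_arc (n : nat) (o : 'I_n -> bool) : rel 'I_n.+1 :=
  fun u v =>
    [exists i : 'I_n,
       ((u == ord0) && (v == lift ord0 i) && o i)
    || ((u == lift ord0 i) && (v == ord0) && ~~ o i)].

From mathcomp Require Import all_boot zify.

Set Implicit Arguments.
Unset Strict Implicit.
Unset Printing Implicit Defensive.

(* For D = {0,1} the D-weight of u is the label sum over u and its
   out-neighbours.  Give the centre of the star the top label n+1 and the
   leaves the labels 1..n, leaves pointing into the centre first.  A leaf
   pointing away from the centre then weighs at most n, a leaf pointing into
   it weighs n+1 plus its own label, and the centre weighs n+1 plus the labels
   of the outward leaves; that sum is 0 or exceeds every inward label. *)

Local Notation D01 := (fun k : nat => (k == 0) || (k == 1)).

Section Rank.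
Variables (T : finType) (key : T -> nat).

Definition rank (x : T) : nat := #|[pred y | key y < key x]|.

Lemma rank_lt_card x : rank x < #|T|.
Proof.
apply: proper_card; rewrite properE subset_predT /=.
by apply/subsetPn; exists x; rewrite ?inE ?ltnn.
Qed.

Lemma rank_mono x y : key x < key y -> rank x < rank y.
Proof.
move=> lt_xy; apply: proper_card; rewrite properE; apply/andP; split.
  by apply/subsetP => z; rewrite !inE => /ltn_trans; apply.
by apply/subsetPn; exists x; rewrite !inE ?lt_xy ?ltnn.
Qed.

Lemma rank_inj : injective key -> injective rank.
Proof.
move=> key_inj x y eq_rank; apply: key_inj.
by case: (ltngtP (key x) (key y)) => // /rank_mono; rewrite eq_rank ltnn.
Qed.

End Rank.

Lemma D_antimagic_of_labelling (V : finType) (arc : rel V) (D : pred nat)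
    (lab : V -> nat) :
  distance_set arc D -> (forall v, lab v < #|V|) -> injective lab ->
  injective (fun u => \sum_(v | inNbD arc D u v) (lab v).+1) ->
  D_antimagic arc D.
Proof.
move=> distD lab_lt lab_inj weight_inj; split=> //.
exists (fun v => Ordinal (lab_lt v)); split; last exact: weight_inj.
by apply: inj_card_bij; [move=> u v /(congr1 val) /lab_inj | rewrite card_ord].
Qed.

Section Distance01.
Variables (V : finType) (arc : rel V).
Hypothesis arc_irr : irreflexive arc.

Lemma walk_k1 u v : walk_k arc 1 u v = arc u v.
Proof.
by apply/existsP/idP => [[w /andP [uw /eqP <-]] // | uv]; exists v; rewrite uv /=.
Qed.

Lemma dist_eq0 u : dist_eq arc u u 0.
Proof. by rewrite /dist_eq /= eqxx; apply/forallP => -[]. Qed.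

Lemma dist_eq1 u v : arc u v -> dist_eq arc u v 1.
Proof.
move=> uv; rewrite /dist_eq walk_k1 uv; apply/forallP => -[[|//] _] /=.
by apply: contraTneq uv => ->; rewrite arc_irr.
Qed.

Lemma distance_set01 u v : arc u v -> distance_set arc D01.
Proof.
move=> uv; split; first by exists 0.
move=> k /orP [] /eqP ->; first by exists u, u, 0; split=> //; exact: dist_eq0.
by exists u, v, 1; split=> //; exact: dist_eq1.
Qed.

Lemma inNbD01 u v : inNbD arc D01 u v = (u == v) || arc u v.
Proof.
apply/existsP/idP => [[k /andP [/orP [] /eqP -> /andP [walk _]]] | ].
- by move: walk => /= ->.
- by rewrite -walk_k1 walk orbT.
case/orP => [/eqP <- | uv].
  have card_gt0 : 0 < #|V| by apply/card_gt0P; exists u.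
  by exists (Ordinal card_gt0); apply/andP; split; last exact: dist_eq0.
have uv_neq : u != v by apply: contraTneq uv => ->; rewrite arc_irr.
have card_gt1 : 1 < #|V| by have := max_card [set u; v]; rewrite cards2 uv_neq.
by exists (Ordinal card_gt1); apply/andP; split; last exact: dist_eq1.
Qed.

Lemma D01_antimagic_of_labelling (lab : V -> nat) u0 v0 :
  arc u0 v0 -> (forall v, lab v < #|V|) -> injective lab ->
  injective (fun u => \sum_(v | (u == v) || arc u v) (lab v).+1) ->
  D_antimagic arc D01.
Proof.
move=> uv0 lab_lt lab_inj weight_inj.
apply: (D_antimagic_of_labelling (distance_set01 uv0) lab_lt lab_inj).
by move=> u v; rewrite !(eq_bigl _ _ (inNbD01 _)); apply: weight_inj.
Qed.

End Distance01.

Section Star.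
Variables (n : nat) (o : 'I_n -> bool).
Local Notation arc := (star_arc o).
Local Notation leaf := (lift ord0).

Lemma leaf_eq_center i : (leaf i == ord0 :> 'I_n.+1) = false.
Proof. by rewrite eq_sym (negbTE (neq_lift _ _)). Qed.

Lemma center_eq_leaf i : (ord0 == leaf i :> 'I_n.+1) = false.
Proof. exact: negbTE (neq_lift _ _). Qed.

Lemma star_arc_cc : arc ord0 ord0 = false.
Proof. by apply/existsP => -[i]; rewrite center_eq_leaf andbF. Qed.

Lemma star_arc_cl i : arc ord0 (leaf i) = o i.
Proof.
apply/existsP/idP => [[j] | oi]; last by exists i; rewrite !eqxx oi.
by rewrite center_eq_leaf (inj_eq lift_inj) /= orbF => /andP [/eqP ->].
Qed.

Lemma star_arc_lc i : arc (leaf i) ord0 = ~~ o i.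
Proof.
apply/existsP/idP => [[j] | oi]; last by exists i; rewrite !eqxx oi orbT.
by rewrite leaf_eq_center (inj_eq lift_inj) /= andbT => /andP [/eqP ->].
Qed.

Lemma star_arc_ll i j : arc (leaf i) (leaf j) = false.
Proof. by apply/existsP => -[k]; rewrite !leaf_eq_center andbF. Qed.

Lemma star_arc_irr : irreflexive arc.
Proof.
by move=> u; case: (unliftP ord0 u) => [i|] ->; rewrite ?star_arc_ll ?star_arc_cc.
Qed.

Lemma star_has_arc : 0 < n -> exists u v, arc u v.
Proof.
move=> n_gt0; pose i := Ordinal n_gt0; case oi: (o i).
  by exists ord0, (leaf i); rewrite star_arc_cl.
by exists (leaf i), ord0; rewrite star_arc_lc oi.
Qed.

Definition star_key (i : 'I_n) : nat := o i * n + i.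

Lemma star_key_inj : injective star_key.
Proof.
move=> i j; rewrite /star_key => eq_key; apply/val_inj.
by have := ltn_ord i; have := ltn_ord j; case: (o i) (o j) eq_key => -[] /=; lia.
Qed.

Local Notation rk := (rank star_key).

Lemma rank_star_lt i : rk i < n.
Proof. by rewrite -[n in _ < n]card_ord rank_lt_card. Qed.

Lemma rank_in_lt_out i j : ~~ o i -> o j -> rk i < rk j.
Proof.
move=> /negbTE in_i out_j; apply: rank_mono; rewrite /star_key in_i out_j.
by have := ltn_ord i; lia.
Qed.

Definition star_label (u : 'I_n.+1) : nat :=
  if unlift ord0 u is Some i then rk i else n.

Lemma star_label_center : star_label ord0 = n.
Proof. by rewrite /star_label unlift_none. Qed.

Lemma star_label_leaf i : star_label (leaf i) = rk i.
Proof. by rewrite /star_label liftK. Qed.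

Lemma star_label_lt u : star_label u < #|'I_n.+1|.
Proof.
rewrite card_ord; case: (unliftP ord0 u) => [i|] ->.
  by rewrite star_label_leaf ltnS ltnW ?rank_star_lt.
by rewrite star_label_center.
Qed.

Lemma star_label_inj : injective star_label.
Proof.
move=> u v; case: (unliftP ord0 u) => [i|] ->; case: (unliftP ord0 v) => [j|] ->;
  rewrite // ?star_label_leaf ?star_label_center.
- by move/(rank_inj star_key_inj) ->.
- by have := rank_star_lt i; lia.
- by have := rank_star_lt j; lia.
Qed.

Definition star_weight (u : 'I_n.+1) : nat :=
  \sum_(v | (u == v) || arc u v) (star_label v).+1.

Lemma star_weightE u :
  star_weight u = (if (u == ord0) || arc u ord0 then n.+1 else 0)
                  + \sum_(i | (u == leaf i) || arc u (leaf i)) (rk i).+1.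
Proof.
rewrite /star_weight big_mkcond big_ord_recl /= star_label_center.
congr (_ + _); rewrite [RHS]big_mkcond.
by apply: eq_bigr => i _; rewrite star_label_leaf.
Qed.

Lemma star_weight_leaf i :
  star_weight (leaf i) = (rk i).+1 + (if o i then 0 else n.+1).
Proof.
rewrite star_weightE leaf_eq_center star_arc_lc if_neg addnC.
rewrite (eq_bigl (pred1 i)) ?big_pred1_eq // => j.
by rewrite star_arc_ll orbF (inj_eq lift_inj) eq_sym.
Qed.

Lemma star_weight_center : star_weight ord0 = n.+1 + \sum_(i | o i) (rk i).+1.
Proof.
rewrite star_weightE eqxx; congr (_ + _).
by apply: eq_bigl => i; rewrite center_eq_leaf star_arc_cl.
Qed.

Lemma star_weight_center_neq_leaf i : star_weight ord0 != star_weight (leaf i).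
Proof.
rewrite star_weight_center star_weight_leaf; have := rank_star_lt i.
case: (pickP o) => [j out_j | no_out].
  have : (rk j).+1 <= \sum_(k | o k) (rk k).+1 by rewrite (bigD1 j) //= leq_addr.
  case: (boolP (o i)) => [_ | in_i] /=; last have := rank_in_lt_out in_i out_j; lia.
by rewrite big_pred0 // no_out /=; lia.
Qed.

Lemma star_weight_leaf_inj : injective (fun i => star_weight (leaf i)).
Proof.
move=> i j /=; rewrite !star_weight_leaf => eq_w; apply: (rank_inj star_key_inj).
have := rank_star_lt i; have := rank_star_lt j.
by case: (o i) (o j) eq_w => -[] /=; lia.
Qed.

Lemma star_weight_inj : injective star_weight.
Proof.
move=> u v; case: (unliftP ord0 u) => [i|] ->; case: (unliftP ord0 v) => [j|] ->;
  move=> // eq_w.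
- by rewrite (star_weight_leaf_inj eq_w).
- by have := star_weight_center_neq_leaf i; rewrite eq_w eqxx.
- by have := star_weight_center_neq_leaf j; rewrite eq_w eqxx.
Qed.

End Star.

Theorem mainTheorem2 (n : nat) (o : 'I_n -> bool) :
  1 <= n -> D_antimagic (star_arc o) (fun k => (k == 0) || (k == 1)).
Proof.
move=> n_gt0; have [u [v uv]] := star_has_arc o n_gt0.
apply: (D01_antimagic_of_labelling (star_arc_irr o) uv (star_label_lt o)).
- exact: star_label_inj.
- exact: star_weight_inj.
Qed.
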